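(* Let $k\in\mathbb{N}$, let $A\subseteq\mathbb{N}$ with $\min(A)=0$ and $\max(A)\le k$, and suppose $A=B+C$ with $B,C\subseteq\mathbb{N}$ and $\max(B)\le\max(C)$. Define \[C_B=C\cup\{s\in\{0,\ldots,k\}\setminus A: s<\max(B)\}\cup\{s-\max(B): s\in\{0,\ldots,k\}\setminus A,\ s\ge\max(B)\}.\] Then $B+C_B=\{0,1,\ldots,k\}$.
   Context: $\mathbb{N}=\{0,1,\ldots\}$ and $X+Y=\{x+y:x\in X,y\in Y\}$. *)

From Stdlib Require Import Arith Lia.

Definition sumset (X Y : nat -> Prop) : nat -> Prop :=
  fun s => exists x y, X x /\ Y y /\ s = x + y.

Definition is_min (S : nat -> Prop) (m : nat) : Prop :=
  S m /\ forall x, S x -> m <= x.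
Definition is_max (S : nat -> Prop) (m : nat) : Prop :=
  S m /\ forall x, S x -> x <= m.

Definition CB (k : nat) (A C : nat -> Prop) (mB : nat) : nat -> Prop :=
  fun c => C c
    \/ (exists s, s <= k /\ ~ A s /\ s < mB /\ c = s)
    \/ (exists s, s <= k /\ ~ A s /\ mB <= s /\ c = s - mB).

(* Every s <= k lies in B + C_B: if s is in A = B + C it is already a sum
   with summand in C, and a gap s of A is 0 + s when s < max B and
   max B + (s - max B) otherwise, since 0 and max B lie in B.  Conversely a
   sum b + c with c in C lies in A, hence is at most k; and the sums using the
   other two parts of C_B are bounded by max B + max B - 1 <= max A <= k or
   by the gap s itself. *)

From Stdlib Require Import Arith Lia Classical.

Lemma sumset_subset_r (X Y Y' : nat -> Prop) (s : nat) :
  (forall y, Y y -> Y' y) -> sumset X Y s -> sumset X Y' s.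
Proof.
  intros HYY' (x & y & Hx & Hy & ->).
  exists x, y; auto.
Qed.

Lemma sumset0 (X Y : nat -> Prop) : sumset X Y 0 -> X 0 /\ Y 0.
Proof.
  intros (x & y & Hx & Hy & E).
  assert (x = 0 /\ y = 0) as [-> ->] by lia.
  auto.
Qed.

Lemma max_add_max (X Y : nat -> Prop) (mX mY : nat) (S : nat -> Prop) :
  (forall s, sumset X Y s -> S s) -> is_max X mX -> is_max Y mY ->
  S (mX + mY).
Proof.
  intros HS [HmX _] [HmY _].
  apply HS; exists mX, mY; auto.
Qed.

Lemma sumset_CB_le (k : nat) (A B C : nat -> Prop) (mB : nat) :
  (forall s, sumset B C s -> s <= k) ->
  (forall b, B b -> b <= mB) -> mB + mB <= k ->
  forall s, sumset B (CB k A C mB) s -> s <= k.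
Proof.
  intros HBC HB HmB s (b & c & Hb & Hc & ->).
  pose proof (HB b Hb).
  destruct Hc as [Hc | [(s' & ? & ? & ? & ->) | (s' & ? & ? & ? & ->)]].
  - apply HBC; exists b, c; auto.
  - lia.
  - lia.
Qed.

Lemma sumset_CB_ge (k : nat) (A B C : nat -> Prop) (mB : nat) :
  B 0 -> B mB -> (forall s, A s -> sumset B C s) ->
  forall s, s <= k -> sumset B (CB k A C mB) s.
Proof.
  intros HB0 HmB HA s Hs.
  destruct (classic (A s)) as [HAs | HnAs].
  - apply (sumset_subset_r B C); [unfold CB; tauto | auto].
  - destruct (Nat.lt_ge_cases s mB).
    + exists 0, s; repeat split; auto.
      right; left; exists s; auto.
    + exists mB, (s - mB); repeat split; auto; [| lia].
      right; right; exists s; auto.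
Qed.

Theorem mainTheorem14 (k : nat) (A B C : nat -> Prop) (mA mB mC : nat) :
  is_min A 0 -> is_max A mA -> mA <= k ->
  (forall s, A s <-> sumset B C s) ->
  is_max B mB -> is_max C mC -> mB <= mC ->
  forall s, sumset B (CB k A C mB) s <-> s <= k.
Proof.
  intros [HA0 _] [_ HAle] Hk HA HBmax HCmax Hmm s.
  assert (HBC_le : forall s, sumset B C s -> s <= k).
  { intros s' Hs'. apply HA, HAle in Hs'. lia. }
  assert (HmBmC : mB + mC <= k).
  { apply (max_add_max B C mB mC); auto. }
  destruct (sumset0 B C (proj1 (HA 0) HA0)) as [HB0 _].
  split.
  - apply (sumset_CB_le k A B C mB HBC_le (proj2 HBmax)). lia.
  - apply sumset_CB_ge; [exact HB0 | exact (proj1 HBmax) |].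
    intros s'; apply HA.
Qed.
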